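(* Let $\Gamma$ be a metrized graph with $v$ vertices, and let $p\in V(\Gamma)$. Then $$2(v-2)Kf(\Gamma)=2\sum_{e_i \in E(\Gamma)} \frac{R_i}{L_i+R_i} Kf(\overline{\Gamma}_i) + 2v \sum_{e_i \in E(\Gamma)} \frac{L_i R_{a_i,p} R_{b_i,p}}{(L_i+R_i)^2}-v \sum_{e_i \in E(\Gamma)} \frac{L_i R_i^2}{(L_i+R_i)^2} + \sum_{w \in V(\Gamma)}\sum_{e_i \in E(\Gamma)} \frac{R_i}{L_i+R_i} \big(r(p_i,w)+r(q_i,w)\big),$$ where $p_i,q_i$ denote the end points of $e_i$.
   Context: A metrized graph $\Gamma$ is a finite connected graph (multiple edges and self-loops allowed) each of whose edges is identified with a closed segment of positive length, with a finite nonempty vertex set $V(\Gamma)$ containing every point of valence $\neq2$; $v=\#V(\Gamma)$, $E(\Gamma)$ its edge set, $L_i$ the length of $e_i$, $r$ the effective resistance (edges as resistors of resistance equal to length). $Kf(\Gamma)=\frac12\sum_{p,q\in V(\Gamma)}r(p,q)$. For an edge $e_i$ with end points $p_i,q_i$: if $\Gamma-e_i$ (interior deleted) is connected, $R_i$ is the effective resistance between $p_i,q_i$ in $\Gamma-e_i$, $R_{a_i,p}=\hat j_{p_i}(p,q_i)$, $R_{b_i,p}=\hat j_{q_i}(p,p_i)$ with $\hat j_z(x,y)$ the voltage function of $\Gamma-e_i$ (potential at $x$ when unit current enters at $y$ and exits at $z$, potential $0$ at $z$); if $e_i$ is a bridge, $R_{a_i,p}=0,R_{b_i,p}=R_i$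 for $p$ in the component of $\Gamma-e_i$ containing $p_i$ and $R_{a_i,p}=R_i,R_{b_i,p}=0$ otherwise, with every expression in $R_i$ interpreted as its limit as $R_i\to\infty$; for a self-loop $R_i=0$. $\overline\Gamma_i$ is obtained by contracting $e_i$ to a point, with vertex set the image of $V(\Gamma)$. *)

From HB Require Import structures.
From mathcomp Require Import all_boot all_order all_algebra.
From mathcomp Require Import all_classical all_reals all_analysis.
Set Implicit Arguments. Unset Strict Implicit. Unset Printing Implicit Defensive.
Import Order.TTheory GRing.Theory Num.Theory.
Import numFieldTopology.Exports numFieldNormedType.Exports.
Local Open Scope ring_scope.

(* A metrized graph is modelled by its combinatorial model: the vertex set
   V(Gamma) is the finite type V, the edges are indexed by 'I_m, edge j has
   end points (ends j).1, (ends j).2 (self-loops and multiple edges allowed)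
   and length len j.  Effective resistances between vertices of a metrized
   graph are those of the resistor network on V(Gamma) with edge j a resistor
   of resistance len j.

   Subgraphs obtained by deleting edges are handled by a predicate
   P : pred 'I_m selecting the edges kept. *)

Section MetrizedGraph.
Variables (R : realType) (V : finType) (m : nat).

Definition inc (ends : 'I_m -> V * V) (x : V) (j : 'I_m) : R :=
  ((ends j).1 == x)%:R - ((ends j).2 == x)%:R.

(* weighted Laplacian (conductance 1/len j on edge j) of the edges in P,
   indexed by V through enum_rank / enum_val *)
Definition lapmx (P : pred 'I_m) (ends : 'I_m -> V * V) (len : 'I_m -> R)
  : 'M[R]_#|V| :=
  \matrix_(a, b) \sum_(j < m | P j)
     (len j)^-1 * inc ends (enum_val a) j * inc ends (enum_val b) j.

Definition dvec (x : V) : 'rV[R]_#|V| := delta_mx 0 (enum_rank x).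

(* voltage function j_z(x,y): potential at x when a unit current enters at y
   and exits at z, the potential at z being 0.  The potential phi solves the
   Kirchhoff equations phi * L = e_y - e_z (pinvmx gives a solution whenever
   one exists, e.g. when y and z are in the same connected component). *)
Definition voltage (P : pred 'I_m) (ends : 'I_m -> V * V) (len : 'I_m -> R)
  (z x y : V) : R :=
  let phi := (dvec y - dvec z) *m pinvmx (lapmx P ends len) in
  phi 0 (enum_rank x) - phi 0 (enum_rank z).

Definition eff_res P ends len (x y : V) : R := voltage P ends len y x x.

Definition kirchhoff P ends len (S : {set V}) : R :=
  2^-1 * \sum_(x in S) \sum_(y in S) eff_res P ends len x y.

Definition adj (P : pred 'I_m) (ends : 'I_m -> V * V) : rel V :=
  fun x y => [exists j : 'I_m, P j && ((ends j == (x, y)) || (ends j == (y, x)))].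

Definition connected_graph (P : pred 'I_m) (ends : 'I_m -> V * V) : Prop :=
  forall x y : V, connect (adj P ends) x y.

Section Edge.
Variables (ends : 'I_m -> V * V) (len : 'I_m -> R) (i : 'I_m).

Definition pe : V := (ends i).1.
Definition qe : V := (ends i).2.

Definition del : pred 'I_m := fun j => j != i.

Definition Ri : R := eff_res del ends len pe qe.

Definition is_bridge : bool := ~~ connect (adj del ends) pe qe.

Definition Ra (p : V) : R := voltage del ends len pe p qe.
Definition Rb (p : V) : R := voltage del ends len qe p pe.

(* An expression F(R_i, R_{a_i,p}, R_{b_i,p}) attached to edge e_i; for a
   bridge it is interpreted as its limit as R_i -> +oo, with
   R_{a_i,p} = 0, R_{b_i,p} = R_i if p is in the component of Gamma - e_i
   containing p_i, and R_{a_i,p} = R_i, R_{b_i,p} = 0 otherwise. *)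
Definition edge_expr (p : V) (F : R -> R -> R -> R) : R :=
  if is_bridge then
    let inPc := connect (adj del ends) pe p in
    lim ((F r (if inPc then 0 else r) (if inPc then r else 0)) @[r --> +oo%R])%classic
  else F Ri (Ra p) (Rb p).

(* contraction of e_i: q_i is identified with p_i; the vertex set is the image
   of V(Gamma); e_i itself is removed (for a self-loop this is exactly
   contracting the loop to a point) *)
Definition cmap (x : V) : V := if x == qe then pe else x.
Definition cends : 'I_m -> V * V := fun j => (cmap (ends j).1, cmap (ends j).2).
Definition cverts : {set V} := cmap @: [set: V].

Definition Kf_contr : R := kirchhoff del cends len cverts.

End Edge.
End MetrizedGraph.

From HB Require Import structures.
From mathcomp Require Import all_boot all_order all_algebra.
From mathcomp Require Import all_classical all_reals all_analysis.
From mathcomp Require Import ring lra.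
Set Implicit Arguments. Unset Strict Implicit. Unset Printing Implicit Defensive.
Import Order.TTheory GRing.Theory Num.Theory.
Import numFieldTopology.Exports numFieldNormedType.Exports.
Local Open Scope ring_scope.

(* Let G be the Green's function of the Laplacian L, i.e. the Moore-Penrose
   inverse (L + J/n)^-1 - J/n, so that r(x,y) = G(x,x) + G(y,y) - 2 G(x,y) and
   Kf = n tr G.  For an edge e_i = [a,b] let g_i = G(a,.) - G(b,.), the
   potential of a unit current from a to b, and rho_i = g_i(a) - g_i(b) = r(a,b).
   Deleting e_i changes L by a rank-one matrix, which gives
   R_i/(L_i+R_i) = rho_i/L_i,  L_i R_{a_i,p} R_{b_i,p}/(L_i+R_i)^2
   = (g_i(a)-g_i(p))(g_i(p)-g_i(b))/L_i  and  L_i R_i^2/(L_i+R_i)^2 = rho_i^2/L_i,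
   also in the limit R_i -> oo for a bridge, where rho_i = L_i.  Contracting
   e_i gives r'(x,y) = r(x,y) - (g_i(x)-g_i(y))^2/rho_i.  Every edge term is
   thus a polynomial in G, and the three identities
   sum_i rho_i/L_i = n - 1 (Foster),  sum_i sum_x g_i(x)^2/L_i = tr G  and
   sum_i g_i(p)(g_i(a)+g_i(b)-g_i(p))/L_i = -tr G/n
   collapse the right-hand side to 2(n-2) n tr G. *)

Section Limits.
Variable R : realType.
Local Open Scope classical_set_scope.

Lemma cvg_inv_addl_pinfty (L : R) : (L + r)^-1 @[r --> +oo] --> (0 : R).
Proof.
apply/(@gtr0_cvgV0 R R +oo _ (fun r => L + r)); last exact: cvg_addrl.
near=> r; rewrite -ltrBlDl sub0r; near: r; apply: nbhs_pinfty_gt; exact: num_real.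
Unshelve. all: end_near.
Qed.

Lemma cvg_ratio_addl_pinfty (L : R) : r / (L + r) @[r --> +oo] --> (1 : R).
Proof.
have H : 1 - L * (L + r)^-1 @[r --> +oo] --> (1 - L * 0 : R).
  by apply: cvgB; [exact: cvg_cst | apply: cvgMl_tmp; exact: cvg_inv_addl_pinfty].
rewrite mulr0 subr0 in H; apply: cvg_trans H; apply: near_eq_cvg; near=> r.
have Lr_neq0 : L + r != 0.
  apply: lt0r_neq0; rewrite -ltrBlDl sub0r; near: r.
  apply: nbhs_pinfty_gt; exact: num_real.
by rewrite /=; field.
Unshelve. all: end_near.
Qed.

Lemma lim_ratio_addl_pinfty (L : R) : lim (r / (L + r) @[r --> +oo]) = 1.
Proof. exact/cvg_lim/cvg_ratio_addl_pinfty. Qed.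

Lemma lim_sqr_ratio_addl_pinfty (L : R) :
  lim (L * r ^+ 2 / (L + r) ^+ 2 @[r --> +oo]) = L.
Proof.
apply: cvg_lim => //.
have H : L * ((r / (L + r)) * (r / (L + r))) @[r --> +oo] --> (L * (1 * 1) : R).
  by apply: cvgMl_tmp; apply: cvgM; exact: cvg_ratio_addl_pinfty.
rewrite !mulr1 in H; apply: cvg_trans H; apply: near_eq_cvg; near=> r.
by rewrite /= -!expr2 expr_div_n mulrA.
Unshelve. all: end_near.
Qed.

Lemma lim_pinfty_cst (f : R -> R) (k : R) :
  (forall r, f r = k) -> lim (f r @[r --> +oo]) = k.
Proof. by move=> fk; rewrite (_ : f = fun=> k) ?lim_cst //; apply: funext. Qed.

End Limits.

Section Sums.
Variables (R : realFieldType) (V : finType).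
Local Notation n := (#|V|%:R : R).

Lemma sum_cst (k : R) : \sum_(x : V) k = n * k.
Proof. by rewrite sumr_const mulr_natl. Qed.

Lemma sum_sqr_subr (f : V -> R) z : \sum_x f x = 0 ->
  \sum_x (f x - f z) ^+ 2 = \sum_x f x ^+ 2 + n * f z ^+ 2.
Proof.
move=> f0; transitivity (\sum_x f x ^+ 2 - 2 * f z * \sum_x f x + \sum_(x : V) f z ^+ 2).
  by rewrite mulr_sumr -sumrB -big_split; apply: eq_bigr => x _ /=; ring.
by rewrite f0 mulr0 subr0 sum_cst.
Qed.

Lemma sum_sum_sqr_subr (f : V -> R) : \sum_x f x = 0 ->
  \sum_x \sum_y (f x - f y) ^+ 2 = 2 * n * \sum_x f x ^+ 2.
Proof.
move=> f0; transitivity (\sum_x (\sum_y f y ^+ 2 + n * f x ^+ 2)).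
  apply: eq_bigr => x _; rewrite -sum_sqr_subr //.
  by apply: eq_bigr => y _; rewrite -sqrrN opprB.
by rewrite big_split /= -mulr_sumr sum_cst; ring.
Qed.

Lemma sum_sum_neq (h : V -> V -> R) b :
  (forall x y, h x y = h y x) -> h b b = 0 ->
  \sum_(x | x != b) \sum_(y | y != b) h x y =
  \sum_x \sum_y h x y - 2 * \sum_x h x b.
Proof.
move=> hC hbb.
have sum_neq (F : V -> R) : \sum_(x | x != b) F x = \sum_x F x - F b.
  by rewrite [in RHS](bigD1 b) //= addrAC subrr add0r.
under eq_bigr do rewrite sum_neq.
rewrite (sum_neq (fun x => \sum_y h x y - h x b)) sumrB hbb subr0.
under [\sum_y h b y]eq_bigr do rewrite hC.
ring.
Qed.

End Sums.

Section Laplacian.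
Variables (R : realType) (V : finType) (m : nat).
Variables (ends : 'I_m -> V * V) (len : 'I_m -> R).

Definition fun_of_row (u : 'rV[R]_#|V|) (x : V) : R := u 0 (enum_rank x).
Definition row_of_fun (f : V -> R) : 'rV[R]_#|V| := \row_k f (enum_val k).

Lemma row_of_funK f : fun_of_row (row_of_fun f) =1 f.
Proof. by move=> x; rewrite /fun_of_row mxE enum_rankK. Qed.

Lemma sum_enum_rank (F : 'I_#|V| -> R) : \sum_k F k = \sum_x F (enum_rank x).
Proof.
rewrite (reindex enum_rank) //.
by exists enum_val => x _; [exact: enum_rankK | exact: enum_valK].
Qed.

Lemma sum_mul_eq (f : V -> R) (a : V) : \sum_x f x * (a == x)%:R = f a.
Proof.
rewrite (bigD1 a) //= eqxx mulr1 big1 ?addr0 // => x /negbTE.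
by rewrite eq_sym => ->; rewrite mulr0.
Qed.

Lemma sum_mul_inc (f : V -> R) j :
  \sum_x f x * inc R ends x j = f (pe ends j) - f (qe ends j).
Proof. by rewrite /inc; under eq_bigr do rewrite mulrBr; rewrite sumrB !sum_mul_eq. Qed.

Lemma incE (w : V) j : inc R ends w j = (w == pe ends j)%:R - (w == qe ends j)%:R.
Proof. by rewrite /inc !(eq_sym w). Qed.

Definition lapfun (P : pred 'I_m) (f : V -> R) (y : V) : R :=
  \sum_(j < m | P j)
     (len j)^-1 * (f (pe ends j) - f (qe ends j)) * inc R ends y j.

Lemma mul_lapmxE P u k :
  (u *m lapmx P ends len) 0 k = lapfun P (fun_of_row u) (enum_val k).
Proof.
rewrite mxE sum_enum_rank.
under eq_bigr do rewrite mxE enum_rankK big_distrr /=.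
rewrite exchange_big; apply: eq_bigr => j _.
rewrite -sum_mul_inc mulr_sumr mulr_suml; apply: eq_bigr => x _.
by rewrite /fun_of_row; ring.
Qed.

Lemma eq_lapfun P f h : f =1 h -> lapfun P f =1 lapfun P h.
Proof. by move=> fh y; apply: eq_bigr => j _; rewrite !fh. Qed.

Lemma lapfunB P f h y :
  lapfun P (fun x => f x - h x) y = lapfun P f y - lapfun P h y.
Proof. by rewrite /lapfun -sumrB; apply: eq_bigr => j _; ring. Qed.

Lemma lapfunZ P k f y : lapfun P (fun x => k * f x) y = k * lapfun P f y.
Proof. by rewrite /lapfun big_distrr; apply: eq_bigr => j _ /=; ring. Qed.

Lemma lapfun_edge_const (P : pred 'I_m) (f : V -> R) :
  (forall j, P j -> f (pe ends j) = f (qe ends j)) -> forall y, lapfun P f y = 0.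
Proof. by move=> fc y; rewrite /lapfun big1 // => j /fc ->; rewrite subrr mulr0 mul0r. Qed.

Lemma sum_mul_lapfun P f h :
  \sum_y h y * lapfun P f y =
  \sum_(j < m | P j) (len j)^-1 * (f (pe ends j) - f (qe ends j))
                                * (h (pe ends j) - h (qe ends j)).
Proof.
under eq_bigr do rewrite /lapfun big_distrr /=.
rewrite exchange_big; apply: eq_bigr => j _.
by rewrite -(sum_mul_inc h) mulr_sumr; apply: eq_bigr => x _; ring.
Qed.

Lemma edge_const_connect (P : pred 'I_m) (f : V -> R) :
  (forall j, P j -> f (pe ends j) = f (qe ends j)) ->
  forall x y, connect (adj P ends) x y -> f x = f y.
Proof.
move=> fc x y /connectP [s pth ->] {y}.
elim: s x pth => [|z s IH] x //= /andP [exz pth]; rewrite -(IH z pth).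
case/existsP: exz => j /andP [Pj /orP [] /eqP ej]; move: (fc j Pj).
  by rewrite /pe /qe ej.
by rewrite /pe /qe ej.
Qed.

Hypothesis len_gt0 : forall j, 0 < len j.

Lemma len_neq0 j : len j != 0.
Proof. exact: lt0r_neq0. Qed.

Lemma energy_eq0 (P : pred 'I_m) (f : V -> R) : \sum_y f y * lapfun P f y = 0 ->
  forall j, P j -> f (pe ends j) = f (qe ends j).
Proof.
rewrite sum_mul_lapfun => /psumr_eq0P E j Pj; apply/eqP; rewrite -subr_eq0.
have nonneg k : P k ->
    0 <= (len k)^-1 * (f (pe ends k) - f (qe ends k)) * (f (pe ends k) - f (qe ends k)).
  by move=> _; rewrite -mulrA mulr_ge0 ?invr_ge0 ?(ltW (len_gt0 k)) // -expr2 sqr_ge0.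
have /eqP := E nonneg j Pj.
by rewrite -mulrA mulf_eq0 invr_eq0 (negbTE (len_neq0 j)) mulf_eq0 orbb.
Qed.

Lemma harmonic_edge_const (P : pred 'I_m) (f : V -> R) : (forall y, lapfun P f y = 0) ->
  forall j, P j -> f (pe ends j) = f (qe ends j).
Proof. by move=> Lf; apply: energy_eq0; rewrite big1 // => y _; rewrite Lf mulr0. Qed.

Lemma dvecBE (y z : V) k :
  (dvec R y - dvec R z) 0 k = (enum_val k == y)%:R - (enum_val k == z)%:R.
Proof. by rewrite !mxE !eqxx -!(can2_eq enum_valK enum_rankK). Qed.

Lemma voltageE P (z x y : V) (f : V -> R) :
  (forall w, lapfun P f w = (w == y)%:R - (w == z)%:R) ->
  connect (adj P ends) z x ->
  voltage P ends len z x y = f x - f z.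
Proof.
move=> Lf zx; set u := dvec R y - dvec R z.
have fu : row_of_fun f *m lapmx P ends len = u.
  apply/rowP => k; rewrite mul_lapmxE (eq_lapfun _ (row_of_funK f)) Lf.
  by rewrite dvecBE.
have /mulmxKpV phiL : (u <= lapmx P ends len)%MS by apply/submxP; exists (row_of_fun f).
set phi := u *m pinvmx _ in phiL.
have harm w : lapfun P (fun v => fun_of_row phi v - f v) w = 0.
  rewrite lapfunB Lf -[w]enum_rankK -mul_lapmxE phiL enum_rankK.
  by rewrite dvecBE enum_rankK subrr.
have := edge_const_connect (harmonic_edge_const harm) zx.
by rewrite /voltage /= -/u -/phi /fun_of_row => E; lra.
Qed.

End Laplacian.

Section Connectivity.
Variables (V : finType) (m : nat).

Lemma adjC (P : pred 'I_m) (ends : 'I_m -> V * V) : symmetric (adj P ends).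
Proof. by move=> x y; apply/existsP/existsP => [][j H]; exists j; rewrite orbC. Qed.

Lemma connect_map (e e' : rel V) (h : V -> V) :
  (forall x y, e x y -> connect e' (h x) (h y)) ->
  forall x y, connect e x y -> connect e' (h x) (h y).
Proof.
move=> ee' x y /connectP [s pth ->] {y}; elim: s x pth => [|z s IH] x /=.
  by move=> _; exact: connect0.
by case/andP=> /ee' exz /IH; apply: connect_trans.
Qed.

End Connectivity.

Section Green.
Variables (R : realType) (V : finType) (m : nat).
Variables (ends : 'I_m -> V * V) (len : 'I_m -> R).
Hypothesis len_gt0 : forall j, 0 < len j.
Hypothesis conn : connected_graph predT ends.
Variable v0 : V.

Local Notation L := (lapmx predT ends len).
Local Notation n := (#|V|%:R : R).

Definition Jmx : 'M[R]_#|V| := const_mx 1.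

Lemma card_neq0 : n != 0.
Proof. by rewrite pnatr_eq0 -lt0n; apply/card_gt0P; exists v0. Qed.

Lemma tr_lapmx : L^T = L.
Proof. by apply/matrixP => k k'; rewrite !mxE; apply: eq_bigr => j _; ring. Qed.

Lemma mulJ_lapmx : Jmx *m L = 0.
Proof.
apply/matrixP => k k'; rewrite [LHS]mxE.
transitivity (((const_mx 1 : 'rV[R]_#|V|) *m L) 0 k').
  by rewrite mxE; apply: eq_bigr => k2 _; rewrite !mxE.
by rewrite mul_lapmxE mxE lapfun_edge_const // => j _; rewrite /fun_of_row !mxE.
Qed.

Lemma mul_lapmxJ : L *m Jmx = 0.
Proof. by rewrite -[LHS]trmxK trmx_mul trmx_const tr_lapmx mulJ_lapmx trmx0. Qed.

Lemma mulJJ : Jmx *m Jmx = n *: Jmx.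
Proof.
apply/matrixP => k k'; rewrite !mxE.
by under eq_bigr do rewrite !mxE mulr1; rewrite sumr_const card_ord mulr1.
Qed.

Definition lapJ := L + n^-1 *: Jmx.
Definition green := invmx lapJ - n^-1 *: Jmx.

Lemma lapJ_mulJ : lapJ *m Jmx = Jmx.
Proof.
rewrite mulmxDl mul_lapmxJ add0r -scalemxAl mulJJ scalerA.
by rewrite mulVf ?card_neq0 ?scale1r.
Qed.

Lemma mulJ_lapJ : Jmx *m lapJ = Jmx.
Proof.
rewrite mulmxDr mulJ_lapmx add0r -scalemxAr mulJJ scalerA.
by rewrite mulVf ?card_neq0 ?scale1r.
Qed.

Lemma lapJ_unit : lapJ \in unitmx.
Proof.
rewrite -row_free_unit -kermx_eq0; apply/eqP/row_matrixP => k; rewrite row0.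
set u := row k _.
have uM : u *m lapJ = 0 by apply/sub_kermxP; exact: row_sub.
have uJ : u *m Jmx = 0 by rewrite -lapJ_mulJ mulmxA uM mul0mx.
have uL : u *m L = 0 by move: uM; rewrite mulmxDr -scalemxAr uJ scaler0 addr0.
have harm y : lapfun ends len predT (fun_of_row u) y = 0.
  by rewrite -[y]enum_rankK -mul_lapmxE uL mxE.
have u_const x : fun_of_row u x = fun_of_row u v0.
  exact: (edge_const_connect (harmonic_edge_const len_gt0 harm)).
have : \sum_x fun_of_row u x = 0.
  have := congr1 (fun M : 'rV[R]_#|V| => M 0 (enum_rank v0)) uJ.
  rewrite !mxE sum_enum_rank => E; rewrite -[RHS]E.
  by apply: eq_bigr => x _; rewrite /fun_of_row [const_mx 1 _ _]mxE mulr1.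
under eq_bigr do rewrite u_const.
rewrite sumr_const -mulr_natr => /eqP; rewrite mulf_eq0 (negbTE card_neq0) orbF => /eqP u0.
by apply/rowP => k'; rewrite [RHS]mxE -[k']enum_valK -/(fun_of_row u _) u_const u0.
Qed.

Lemma green_mulJ : green *m Jmx = 0.
Proof.
rewrite mulmxBl -{1}lapJ_mulJ mulKmx ?lapJ_unit // -scalemxAl mulJJ scalerA.
by rewrite mulVf ?card_neq0 // scale1r subrr.
Qed.

Lemma green_mul_lapmx : green *m L = 1%:M - n^-1 *: Jmx.
Proof.
have -> : L = lapJ - n^-1 *: Jmx by rewrite /lapJ addrK.
rewrite mulmxBr -scalemxAr green_mulJ scaler0 subr0.
by rewrite mulmxBl mulVmx ?lapJ_unit // -scalemxAl mulJ_lapJ.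
Qed.

Lemma tr_green : green^T = green.
Proof.
have lapJ_tr : lapJ^T = lapJ by rewrite /lapJ linearD /= linearZ /= tr_lapmx trmx_const.
by rewrite /green linearB /= linearZ /= trmx_inv lapJ_tr trmx_const.
Qed.

Definition greenf (x y : V) : R := green (enum_rank x) (enum_rank y).

Lemma greenf_sym x y : greenf x y = greenf y x.
Proof. by rewrite /greenf -{1}tr_green mxE. Qed.

Lemma sum_greenf x : \sum_y greenf x y = 0.
Proof.
have := congr1 (fun M : 'M[R]_#|V| => M (enum_rank x) (enum_rank v0)) green_mulJ.
rewrite [X in X = _]mxE [X in _ = X]mxE sum_enum_rank => E; rewrite -[RHS]E.
by apply: eq_bigr => y _; rewrite /greenf [const_mx 1 _ _]mxE mulr1.
Qed.

Lemma lapfun_greenf x y :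
  lapfun ends len predT (greenf x) y = (x == y)%:R - n^-1.
Proof.
rewrite (@eq_lapfun _ _ _ ends len predT _ (fun_of_row (row (enum_rank x) green)));
  last by move=> z; rewrite /fun_of_row mxE.
rewrite -[y]enum_rankK -mul_lapmxE enum_rankK -row_mul green_mul_lapmx !mxE.
by rewrite (inj_eq enum_rank_inj) mulr1.
Qed.

Lemma lapfun_greenfB x y w :
  lapfun ends len predT (fun v => greenf x v - greenf y v) w = (x == w)%:R - (y == w)%:R.
Proof. by rewrite lapfunB !lapfun_greenf; ring. Qed.

Definition resG (x y : V) : R := greenf x x + greenf y y - 2 * greenf x y.

Lemma eff_resE x y : eff_res predT ends len x y = resG x y.
Proof.
rewrite /eff_res (voltageE len_gt0 (f := fun w => greenf x w - greenf y w)).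
- by rewrite /resG (greenf_sym y x); ring.
- by move=> w; rewrite lapfun_greenfB !(eq_sym w).
- exact: conn.
Qed.

Lemma sum_resG z : \sum_x resG x z = \sum_x greenf x x + n * greenf z z.
Proof.
rewrite /resG sumrB big_split /= sum_cst -mulr_sumr.
under [\sum_x greenf x z]eq_bigr do rewrite greenf_sym.
by rewrite sum_greenf; ring.
Qed.

Lemma sum_sum_resG : \sum_x \sum_y resG x y = 2 * n * \sum_x greenf x x.
Proof.
rewrite exchange_big; under eq_bigr do rewrite sum_resG.
by rewrite big_split /= sum_cst -mulr_sumr; ring.
Qed.

End Green.

Section Deletion.
Variables (R : realType) (V : finType) (m : nat).
Variables (ends : 'I_m -> V * V) (len : 'I_m -> R).
Hypothesis len_gt0 : forall j, 0 < len j.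
Hypothesis conn : connected_graph predT ends.
Variable v0 : V.
Variable i : 'I_m.

Local Notation a := (pe ends i).
Local Notation b := (qe ends i).
Local Notation c := ((len i)^-1).
Local Notation G := (greenf ends len).

Definition gpot (w : V) : R := G a w - G b w.
Definition rho : R := gpot a - gpot b.

Lemma lapfun_gpot w : lapfun ends len predT gpot w = inc R ends w i.
Proof. by rewrite (lapfun_greenfB len_gt0 conn v0) incE !(eq_sym w). Qed.

Lemma lapfun_del (h : V -> R) w : lapfun ends len (del i) h w =
  lapfun ends len predT h w - c * (h a - h b) * inc R ends w i.
Proof.
rewrite /lapfun [in RHS](bigD1 i) //= addrAC subrr add0r.
by apply: eq_bigl => j.
Qed.

Lemma connect_del : ~~ is_bridge ends i -> connected_graph (del i) ends.
Proof.
rewrite /is_bridge negbK => ab x y; apply: connect_sub (conn x y) => u v.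
case/existsP=> j /andP [_ ej]; case: (eqVneq j i) => [ji | ji].
  move: ab; rewrite /pe /qe -ji.
  by case/orP: ej => /eqP -> //=; rewrite (sym_connect_sym (adjC _ _)).
by apply: connect1; apply/existsP; exists j; rewrite /del ji.
Qed.

(* Deleting [e_i] is a rank-one change of the Laplacian: up to a scalar,
   [gpot] is still the potential of a unit current from [a] to [b]. *)
Lemma lapfun_del_gpot w :
  lapfun ends len (del i) gpot w = (1 - c * rho) * inc R ends w i.
Proof. by rewrite lapfun_del lapfun_gpot /rho; ring. Qed.

Lemma rho_del_neq0 : ~~ is_bridge ends i -> 1 - c * rho != 0.
Proof.
move=> nbr; apply/eqP => rho_c.
have harm w : lapfun ends len (del i) gpot w = 0 by rewrite lapfun_del_gpot rho_c mul0r.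
have gab := edge_const_connect (harmonic_edge_const len_gt0 harm) (connect_del nbr a b).
by move: rho_c; rewrite /rho gab subrr mulr0 subr0 => /eqP; rewrite oner_eq0.
Qed.

Definition gdel (w : V) : R := (1 - c * rho)^-1 * gpot w.

Lemma lapfun_gdel w : ~~ is_bridge ends i ->
  lapfun ends len (del i) gdel w = (w == a)%:R - (w == b)%:R.
Proof.
move=> nbr; rewrite lapfunZ lapfun_del_gpot mulrA mulVf ?rho_del_neq0 // mul1r.
exact: incE.
Qed.

Lemma Ri_gpot : ~~ is_bridge ends i -> Ri ends len i = rho / (1 - c * rho).
Proof.
move=> nbr; rewrite /Ri /eff_res (voltageE len_gt0 (f := gdel)).
- by rewrite /gdel /rho; ring.
- by move=> w; rewrite lapfun_gdel.
- exact: connect_del.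
Qed.

Lemma Ra_gpot p : ~~ is_bridge ends i ->
  Ra ends len i p = (gpot a - gpot p) / (1 - c * rho).
Proof.
move=> nbr; rewrite /Ra (voltageE len_gt0 (f := fun w => -1 * gdel w)).
- by rewrite /gdel; ring.
- by move=> w; rewrite lapfunZ lapfun_gdel //; ring.
- exact: connect_del.
Qed.

Lemma Rb_gpot p : ~~ is_bridge ends i ->
  Rb ends len i p = (gpot p - gpot b) / (1 - c * rho).
Proof.
move=> nbr; rewrite /Rb (voltageE len_gt0 (f := gdel)).
- by rewrite /gdel; ring.
- by move=> w; rewrite lapfun_gdel.
- exact: connect_del.
Qed.

Lemma len_add_Ri : ~~ is_bridge ends i ->
  len i + Ri ends len i = len i / (1 - c * rho).
Proof.
move=> nbr; rewrite Ri_gpot //; have d0 := rho_del_neq0 nbr.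
have l0 := len_neq0 len_gt0 i.
have lr0 : len i - rho != 0.
  have -> : len i - rho = len i * (1 - c * rho) by field.
  by rewrite mulf_neq0.
by field; rewrite l0 lr0.
Qed.

(* Across a bridge the whole unit current flows through [e_i]. *)
Lemma gpot_bridge : is_bridge ends i -> forall w,
  gpot w = gpot a - len i + len i * (connect (adj (del i) ends) a w)%:R.
Proof.
move=> br w; pose k x : R := (connect (adj (del i) ends) a x)%:R.
have k_edge j : del i j -> k (pe ends j) = k (qe ends j).
  move=> ji; have ej : adj (del i) ends (pe ends j) (qe ends j).
    by apply/existsP; exists j; rewrite ji /pe /qe -surjective_pairing eqxx.
  by rewrite /k (same_connect1r (sym_connect_sym (adjC _ _)) ej).
have ka : k a = 1 by rewrite /k connect0.
have kb : k b = 0 by rewrite /k (negbTE br).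
have harm y : lapfun ends len predT (fun x => gpot x - len i * k x) y = 0.
  have := lapfun_del k y; rewrite lapfun_edge_const // ka kb => /eqP.
  rewrite eq_sym subr_eq0 => /eqP Lk.
  by rewrite lapfunB lapfunZ lapfun_gpot Lk; field; exact: len_neq0.
have /= := edge_const_connect (harmonic_edge_const len_gt0 harm) (conn a w).
rewrite ka -/(k w) => E.
rewrite [in RHS](_ : gpot a = gpot w - len i * k w + len i * 1); last by rewrite -E; ring.
ring.
Qed.

Lemma rho_bridge : is_bridge ends i -> rho = len i.
Proof. by move=> br; rewrite /rho (gpot_bridge br b) (negbTE br) mulr0; ring. Qed.

Lemma edge_ratioE p :
  edge_expr ends len i p (fun Rv _ _ => Rv / (len i + Rv)) = c * rho.
Proof.
rewrite /edge_expr; case: ifP => br /=.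
  by rewrite lim_ratio_addl_pinfty (rho_bridge br) mulVf ?len_neq0.
have nbr := negbT br; rewrite len_add_Ri // Ri_gpot //.
have := rho_del_neq0 nbr; move: (1 - c * rho) => d d0.
by field; rewrite d0 len_neq0.
Qed.

Lemma edge_crossE p :
  edge_expr ends len i p (fun Rv Rav Rbv => len i * Rav * Rbv / (len i + Rv) ^+ 2) =
  c * (gpot a - gpot p) * (gpot p - gpot b).
Proof.
rewrite /edge_expr; case: ifP => br /=.
  rewrite (lim_pinfty_cst (k := 0)) => [|r]; last by case: ifP; rewrite ?mulr0 ?mul0r.
  rewrite (gpot_bridge br p) (gpot_bridge br b) (negbTE br).
  by case: (connect _ a p) => /=; ring.
have nbr := negbT br; rewrite len_add_Ri // Ra_gpot // Rb_gpot //.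
have := rho_del_neq0 nbr; move: (1 - c * rho) => d d0.
by field; rewrite d0 len_neq0.
Qed.

Lemma edge_sqrE p :
  edge_expr ends len i p (fun Rv _ _ => len i * Rv ^+ 2 / (len i + Rv) ^+ 2) = c * rho ^+ 2.
Proof.
rewrite /edge_expr; case: ifP => br /=.
  by rewrite lim_sqr_ratio_addl_pinfty (rho_bridge br); field; rewrite len_neq0.
have nbr := negbT br; rewrite len_add_Ri // Ri_gpot //.
have := rho_del_neq0 nbr; move: (1 - c * rho) => d d0.
by field; rewrite d0 len_neq0.
Qed.

End Deletion.

Section Contraction.
Variables (R : realType) (V : finType) (m : nat).
Variables (ends : 'I_m -> V * V) (len : 'I_m -> R).
Hypothesis len_gt0 : forall j, 0 < len j.
Hypothesis conn : connected_graph predT ends.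
Variable v0 : V.
Variable i : 'I_m.

Local Notation a := (pe ends i).
Local Notation b := (qe ends i).
Local Notation G := (greenf ends len).
Local Notation g := (gpot ends len i).
Local Notation rh := (rho ends len i).
Local Notation ce := (cends ends i).
Local Notation n := (#|V|%:R : R).

Lemma rho_neq0 : a != b -> rh != 0.
Proof.
move=> ab; apply/eqP => rho0.
have energy0 : \sum_y g y * lapfun ends len predT g y = 0.
  under eq_bigr do rewrite (lapfun_gpot len_gt0 conn v0).
  by rewrite sum_mul_inc; exact: rho0.
have := lapfun_edge_const len (energy_eq0 len_gt0 energy0) a.
rewrite (lapfun_gpot len_gt0 conn v0) incE eqxx (negbTE ab) subr0.
by move/eqP; rewrite oner_eq0.
Qed.

Lemma sum_gpot : \sum_x g x = 0.
Proof. by rewrite sumrB !(sum_greenf len_gt0 conn v0) subrr. Qed.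

Lemma gpot_loop : a = b -> g =1 fun=> 0.
Proof. by move=> ab w; rewrite /gpot ab subrr. Qed.

Lemma cmap_id x : x != b -> cmap ends i x = x.
Proof. by rewrite /cmap => /negbTE ->. Qed.

Lemma cmap_neq (ab : a != b) z : cmap ends i z != b.
Proof. by rewrite /cmap; case: (eqVneq z b). Qed.

Lemma mem_cverts (ab : a != b) x : (x \in cverts ends i) = (x != b).
Proof.
apply/imsetP/idP => [[z _ ->] | xb]; first exact: cmap_neq.
by exists x; rewrite ?inE ?cmap_id.
Qed.

Lemma eq_cmap_natr z w : w != b ->
  ((cmap ends i z == w)%:R : R) = (z == w)%:R + (w == a)%:R * (z == b)%:R.
Proof.
rewrite /cmap => wb; case: (eqVneq z b) => [-> | zb]; last by rewrite mulr0 addr0.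
by rewrite [b == w]eq_sym (negbTE wb) add0r mulr1 eq_sym.
Qed.

Lemma inc_cends (ab : a != b) w j : inc R ce w j =
  if w == b then 0 else inc R ends w j + (w == a)%:R * inc R ends b j.
Proof.
rewrite /inc /cends /=; case: (eqVneq w b) => [-> | wb].
  by rewrite !(negbTE (cmap_neq ab _)) subrr.
by rewrite !eq_cmap_natr //; ring.
Qed.

Lemma lapfun_contr (ab : a != b) (t : V -> R) w : t a = t b ->
  lapfun ce len (del i) t w = if w == b then 0
    else lapfun ends len (del i) t w + (w == a)%:R * lapfun ends len (del i) t b.
Proof.
move=> tab; have tc z : t (cmap ends i z) = t z by rewrite /cmap; case: eqVneq => // ->.
rewrite /lapfun /pe /qe; under eq_bigr do rewrite inc_cends // /cends /= !tc.
case: ifP => _; first by rewrite big1 // => j _; rewrite mulr0.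
by rewrite mulr_sumr -big_split; apply: eq_bigr => j _ /=; ring.
Qed.

(* the potential of a unit current from [x] to [y] in the contracted graph *)
Definition gcontr (x y w : V) : R := G x w - G y w - (g x - g y) / rh * g w.

Lemma gcontr_ab (ab : a != b) x y : gcontr x y a = gcontr x y b.
Proof.
have := rho_neq0 ab; rewrite /gcontr /rho /gpot.
rewrite (greenf_sym ends len x a) (greenf_sym ends len x b).
rewrite (greenf_sym ends len y a) (greenf_sym ends len y b).
by move=> rho0; field.
Qed.

Lemma lapfun_gcontr x y w : lapfun ends len predT (gcontr x y) w =
  (x == w)%:R - (y == w)%:R - (g x - g y) / rh * inc R ends w i.
Proof.
rewrite /gcontr lapfunB (lapfun_greenfB len_gt0 conn v0).
by rewrite lapfunZ (lapfun_gpot len_gt0 conn v0).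
Qed.

Lemma lapfun_contr_gcontr (ab : a != b) x y : x != b -> y != b -> forall w,
  lapfun ce len (del i) (gcontr x y) w = (w == x)%:R - (w == y)%:R.
Proof.
move=> xb yb w; rewrite lapfun_contr ?gcontr_ab // !lapfun_del (gcontr_ab ab).
rewrite subrr mulr0 mul0r !subr0 !lapfun_gcontr !incE eqxx (eq_sym b a) (negbTE ab).
case: (eqVneq w b) => [-> | wb].
  by rewrite (eq_sym b x) (negbTE xb) (eq_sym b y) (negbTE yb) subrr.
by rewrite (negbTE xb) (negbTE yb) !(eq_sym w) /=; ring.
Qed.

Lemma connect_contr (ab : a != b) x y : x != b -> y != b ->
  connect (adj (del i) ce) y x.
Proof.
move=> xb yb; rewrite -(cmap_id xb) -(cmap_id yb).
apply: connect_map (conn y x) => u v /existsP [j /andP [_ ej]].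
case: (eqVneq j i) => [ji | ji].
  move: ej; rewrite ji.
  by case/orP=> /eqP e; rewrite /cmap /pe /qe e /= eqxx if_same connect0.
apply: connect1; apply/existsP; exists j; rewrite /del ji /cends /=.
by case/orP: ej => /eqP ->; rewrite eqxx ?orbT.
Qed.

Lemma eff_res_contr (ab : a != b) x y : x != b -> y != b ->
  eff_res (del i) ce len x y = resG ends len x y - (g x - g y) ^+ 2 / rh.
Proof.
move=> xb yb; rewrite /eff_res (voltageE len_gt0 (f := gcontr x y)).
- by rewrite /gcontr /resG (greenf_sym ends len y x); ring.
- exact: lapfun_contr_gcontr.
- exact: connect_contr.
Qed.

Lemma Kf_contrE (ab : a != b) : Kf_contr ends len i =
  2^-1 * (\sum_x \sum_y (resG ends len x y - (g x - g y) ^+ 2 / rh)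
          - 2 * \sum_x (resG ends len x b - (g x - g b) ^+ 2 / rh)).
Proof.
rewrite /Kf_contr /kirchhoff -sum_sum_neq; last 2 first.
- by move=> x y; rewrite /resG (greenf_sym ends len x y); ring.
- by rewrite /resG; ring.
congr (_ * _); under eq_bigl do rewrite mem_cverts //.
apply: eq_bigr => x xb; under eq_bigl do rewrite mem_cverts //.
by apply: eq_bigr => y yb; rewrite eff_res_contr.
Qed.

Lemma rho_mul_Kf_contr : rh * Kf_contr ends len i =
  rh * (n * \sum_x G x x - \sum_x G x x - n * G b b)
  - ((n - 1) * \sum_x g x ^+ 2 - n * g b ^+ 2).
Proof.
have [ab | ab] := eqVneq a b.
  have g0 := gpot_loop ab.
  have -> : rh = 0 by rewrite /rho !g0 subr0.
  have -> : \sum_x g x ^+ 2 = 0 by rewrite big1 // => x _; rewrite g0 expr0n.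
  by rewrite g0 /=; ring.
rewrite Kf_contrE //.
under eq_bigr do rewrite sumrB -mulr_suml.
rewrite sumrB -mulr_suml sum_sum_sqr_subr ?sum_gpot // (sum_sum_resG len_gt0 conn v0).
rewrite sumrB -mulr_suml sum_sqr_subr ?sum_gpot // (sum_resG len_gt0 conn v0).
by have := rho_neq0 ab; move: rh => r r0; field.
Qed.

End Contraction.

Section EdgeSums.
Variables (R : realType) (V : finType) (m : nat).
Variables (ends : 'I_m -> V * V) (len : 'I_m -> R).
Hypothesis len_gt0 : forall j, 0 < len j.
Hypothesis conn : connected_graph predT ends.
Variable v0 : V.

Local Notation G := (greenf ends len).
Local Notation g := (gpot ends len).
Local Notation n := (#|V|%:R : R).
Local Notation trG := (\sum_x G x x).

Lemma sum_edges_greenf y (h : V -> R) :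
  \sum_(j < m) (len j)^-1 * (G y (pe ends j) - G y (qe ends j))
                         * (h (pe ends j) - h (qe ends j))
  = h y - n^-1 * \sum_x h x.
Proof.
rewrite -(sum_mul_lapfun ends len predT (G y) h).
under eq_bigr do rewrite (lapfun_greenf len_gt0 conn v0) mulrBr.
by rewrite sumrB sum_mul_eq -mulr_suml mulrC.
Qed.

Lemma foster : \sum_(j < m) (len j)^-1 * rho ends len j = n - 1.
Proof.
transitivity (\sum_x lapfun ends len predT (G x) x).
  rewrite exchange_big; apply: eq_bigr => j _.
  transitivity ((len j)^-1 * \sum_x (G x (pe ends j) - G x (qe ends j)) * inc R ends x j).
    rewrite sum_mul_inc /rho /gpot (greenf_sym ends len (qe ends j) (pe ends j)); ring.
  by rewrite mulr_sumr; apply: eq_bigr => x _; ring.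
under eq_bigr do rewrite (lapfun_greenf len_gt0 conn v0) eqxx.
by rewrite sum_cst /=; field; exact: card_neq0.
Qed.

Lemma sum_edges_gpot_sqr : \sum_(j < m) (len j)^-1 * \sum_x g j x ^+ 2 = trG.
Proof.
transitivity (\sum_x \sum_(j < m) (len j)^-1 * (G x (pe ends j) - G x (qe ends j))
                                               * (G x (pe ends j) - G x (qe ends j))).
  rewrite exchange_big; apply: eq_bigr => j _; rewrite mulr_sumr; apply: eq_bigr => x _.
  rewrite /gpot (greenf_sym ends len (pe ends j) x).
  by rewrite (greenf_sym ends len (qe ends j) x); ring.
apply: eq_bigr => x _.
by rewrite sum_edges_greenf (sum_greenf len_gt0 conn v0) mulr0 subr0.
Qed.

Lemma sum_edges_gpot_cross p :
  \sum_(j < m) (len j)^-1 * g j p * (g j (pe ends j) + g j (qe ends j) - g j p)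
  = - (n^-1 * trG).
Proof.
transitivity (\sum_(j < m) (len j)^-1 * (G p (pe ends j) - G p (qe ends j)) *
   ((fun x => G x x - G p x) (pe ends j) - (fun x => G x x - G p x) (qe ends j))).
  apply: eq_bigr => j _; rewrite /gpot /= (greenf_sym ends len (pe ends j) p).
  rewrite (greenf_sym ends len (qe ends j) p).
  by rewrite (greenf_sym ends len (qe ends j) (pe ends j)); ring.
rewrite (sum_edges_greenf p (fun x => G x x - G p x)) /= sumrB.
by rewrite (sum_greenf len_gt0 conn v0); ring.
Qed.

Lemma kirchhoffE : kirchhoff predT ends len [set: V] = n * trG.
Proof.
rewrite /kirchhoff; under eq_bigl do rewrite inE.
under eq_bigr do under eq_bigl do rewrite inE.
under eq_bigr do under eq_bigr do rewrite (eff_resE len_gt0 conn v0).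
by rewrite (sum_sum_resG len_gt0 conn v0); field.
Qed.

Lemma sum_eff_res z : \sum_w eff_res predT ends len z w = trG + n * G z z.
Proof.
rewrite -(sum_resG len_gt0 conn v0); apply: eq_bigr => w _.
by rewrite (eff_resE len_gt0 conn v0) /resG (greenf_sym ends len z w); ring.
Qed.

Lemma edge_termE p i :
  2 * (edge_expr ends len i p (fun Rv _ _ => Rv / (len i + Rv)) * Kf_contr ends len i)
  + 2 * n * edge_expr ends len i p
      (fun Rv Rav Rbv => len i * Rav * Rbv / (len i + Rv) ^+ 2)
  - n * edge_expr ends len i p (fun Rv _ _ => len i * Rv ^+ 2 / (len i + Rv) ^+ 2)
  + \sum_w edge_expr ends len i p (fun Rv _ _ => Rv / (len i + Rv))
      * (eff_res predT ends len (pe ends i) w + eff_res predT ends len (qe ends i) w)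
  = 2 * n * trG * ((len i)^-1 * rho ends len i)
    - 2 * (n - 1) * ((len i)^-1 * \sum_x g i x ^+ 2)
    + 2 * n * ((len i)^-1 * g i p * (g i (pe ends i) + g i (qe ends i) - g i p)).
Proof.
rewrite !(edge_ratioE len_gt0 conn v0) (edge_crossE len_gt0 conn v0).
rewrite (edge_sqrE len_gt0 conn v0).
rewrite -[_ * _ * Kf_contr _ _ _]mulrA (rho_mul_Kf_contr len_gt0 conn v0).
rewrite -mulr_sumr big_split /= !sum_eff_res.
by rewrite /rho /gpot (greenf_sym ends len (qe ends i) (pe ends i)); ring.
Qed.

End EdgeSums.

Unset Implicit Arguments.

Theorem lemma3p2 (R : realType) (V : finType) (m : nat)
  (ends : 'I_m -> V * V) (len : 'I_m -> R) (p : V) :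
  (forall j, 0 < len j) ->
  connected_graph predT ends ->
  2 * (#|V|%:R - 2) * kirchhoff predT ends len [set: V] =
    2 * (\sum_(i < m)
          edge_expr ends len i p (fun Rv _ _ => Rv / (len i + Rv))
          * Kf_contr ends len i)
  + 2 * #|V|%:R * (\sum_(i < m)
          edge_expr ends len i p
            (fun Rv Rav Rbv => len i * Rav * Rbv / (len i + Rv) ^+ 2))
  - #|V|%:R * (\sum_(i < m)
          edge_expr ends len i p
            (fun Rv _ _ => len i * Rv ^+ 2 / (len i + Rv) ^+ 2))
  + \sum_(w : V) \sum_(i < m)
          edge_expr ends len i p (fun Rv _ _ => Rv / (len i + Rv))
          * (eff_res predT ends len (pe ends i) w
             + eff_res predT ends len (qe ends i) w).
Proof.
move=> len_gt0 conn.
rewrite [X in _ = _ + X]exchange_big /= !mulr_sumr -big_split /= -sumrB -big_split /=.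
rewrite (eq_bigr _ (fun i _ => edge_termE len_gt0 conn p p i)).
rewrite big_split sumrB /= -!mulr_sumr (kirchhoffE len_gt0 conn p) (foster len_gt0 conn p).
rewrite (sum_edges_gpot_sqr len_gt0 conn p) (sum_edges_gpot_cross len_gt0 conn p).
by field; exact: card_neq0 p.
Qed.
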